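(* Let $G$ be an $\alpha_i$-metric graph ($i\ge 0$ an integer). For any vertices $x,y,v$ and any integer $k\in\{0,\dots,d(x,y)\}$, there is a vertex $c\in S_k(x,y)$ such that $d(v,c)\le \max\{d(v,x),d(v,y)\}-\min\{d(x,c),d(y,c)\}+i$ and $d(v,c)\le\max\{d(v,x),d(v,y)\}+i/2$. For an arbitrary vertex $z\in I(x,y)$, we have $d(z,v)\le \max\{d(x,v),d(y,v)\}-\min\{d(x,z),d(y,z)\}+2i+1$ and $d(z,v)\le\max\{d(x,v),d(y,v)\}+3i/2+1$. Furthermore, when $v\in F(z)$, $e(z)\le \max\{e(x),e(y)\}-\min\{d(x,z),d(y,z)\}+2i+1$ and $e(z)\le\max\{e(x),e(y)\}+3i/2+1$.
   Context: All graphs are finite, connected, unweighted, undirected, simple; $d(u,v)$ is the shortest-path distance. $I(u,v)=\{x: d(u,x)+d(x,v)=d(u,v)\}$; the slice is $S_k(u,v)=\{x\in I(u,v): d(u,x)=k\}$. A graph is $\alpha_i$-metric if for all vertices $u,v,w,x$: whenever $v\in I(u,w)$, $w\in I(v,x)$ and $v,w$ are adjacent, then $d(u,x)\ge d(u,v)+d(v,x)-i$. $e(v)=\max_u d(u,v)$ and $F(z)=\{u: d(u,z)=e(z)\}$ is the set of vertices most distant from $z$. *)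

From mathcomp Require Import all_boot all_order.
Set Implicit Arguments. Unset Strict Implicit. Unset Printing Implicit Defensive.

Section Graph.
Variables (T : finType) (e : rel T).

Definition simple_graph : Prop := symmetric e /\ irreflexive e.

Fixpoint reach (n : nat) (u v : T) : bool :=
  match n with
  | 0 => u == v
  | n'.+1 => reach n' u v || [exists w, e u w && reach n' w v]
  end.

Definition connected_graph : Prop := forall u v : T, exists n, reach n u v.

(* shortest-path distance: least n with reach n u v (for a connected graph
   this is < #|T|, so the search range iota 0 #|T| suffices) *)
Definition dist (u v : T) : nat := find (fun n => reach n u v) (iota 0 #|T|).

Definition interval (u v : T) : {set T} :=
  [set x | dist u x + dist x v == dist u v].

Definition slice (k : nat) (u v : T) : {set T} :=
  [set x in interval u v | dist u x == k].

(* alpha_i-metric, with the integer inequality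
   d(u,x) >= d(u,v) + d(v,x) - i  written as  d(u,v)+d(v,x) <= d(u,x)+i *)
Definition alpha_metric (i : nat) : Prop :=
  forall u v w x : T, v \in interval u w -> w \in interval v x -> e v w ->
    dist u v + dist v x <= dist u x + i.

Definition ecc (v : T) : nat := \max_(u : T) dist u v.

Definition farthest (z : T) : {set T} := [set u | dist u z == ecc z].

End Graph.

(* Among the vertices of the slice S_k(x,y), take one, c, nearest to v, and
   let c' be the next vertex on a shortest path from c to v.  Since c' cannot
   be a vertex of S_k(x,y) closer to v, the edge cc' leads away from x or from
   y, and the alpha_i-inequality along it gives d(v,c) + d(x,c) <= d(v,x) + i
   or d(v,c) + d(y,c) <= d(v,y) + i.
   Slices have diameter at most i+1: moving two vertices of S_k(x,y) at
   distance > i+1 one step towards y each keeps their distance, again by the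
   alpha_i-inequality, which is absurd once they reach y.  A vertex z of
   I(x,y) thus lies within i+1 of the vertex c of its slice, and the bounds on
   d(z,v) and, for v in F(z), on e(z) follow by the triangle inequality. *)
From mathcomp Require Import all_boot all_order.
From mathcomp Require Import zify.

Set Implicit Arguments.
Unset Strict Implicit.
Unset Printing Implicit Defensive.

Section Walks.
Variables (T : finType) (e : rel T).

Local Notation reach := (reach e).

Lemma reach_edge u v : e u v -> reach 1 u v.
Proof. by move=> euv /=; apply/orP; right; apply/existsP; exists v; rewrite euv eqxx. Qed.

Lemma reach_trans m n u w v : reach m u w -> reach n w v -> reach (m + n) u v.
Proof.
elim: m u => [|m IHm] u /=; first by move=> /eqP->.
case/orP=> [ruw rwv | /existsP[w' /andP[euw' rw'w]] rwv].
  by rewrite IHm.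
apply/orP; right; apply/existsP; exists w'.
by rewrite euw' (IHm _ rw'w).
Qed.

Lemma reach_path n u v : reach n u v -> exists2 p, path e u p & last u p = v.
Proof.
elim: n u => [|n IHn] u /=; first by move/eqP->; exists [::].
case/orP=> [/IHn // | /existsP[w /andP[euw /IHn[p pw <-]]]].
by exists (w :: p); rewrite /= ?euw.
Qed.

Lemma path_reach u p : path e u p -> reach (size p) u (last u p).
Proof.
elim: p u => [|w p IHp] u /=; first by rewrite eqxx.
case/andP=> euw wp; apply/orP; right; apply/existsP; exists w.
by rewrite euw IHp.
Qed.

Lemma reach_sym : symmetric e -> forall n u v, reach n u v -> reach n v u.
Proof.
move=> sym_e; elim=> [|n IHn] u v /=; first by rewrite eq_sym.
case/orP=> [/IHn-> // | /existsP[w /andP[euw /IHn rvw]]].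
have wu : e w u by rewrite sym_e.
by have := reach_trans rvw (reach_edge wu); rewrite addn1.
Qed.

End Walks.

Section ConnectedGraph.
Variables (T : finType) (e : rel T).
Hypotheses (sym_e : symmetric e) (irr_e : irreflexive e).
Hypothesis conn : connected_graph e.

Local Notation reach := (reach e).
Local Notation dist := (dist e).

Lemma reach_lt_card u v : exists2 n, n < #|T| & reach n u v.
Proof.
have [n /reach_path[p pp <-]] := conn u v.
have [p' pp' up' _] := shortenP pp.
exists (size p'); last exact: path_reach.
by have := max_card (mem (u :: p')); rewrite (card_uniqP up').
Qed.

Lemma dist_lt_card u v : dist u v < #|T|.
Proof.
have [n lt_nT r] := reach_lt_card u v.
rewrite -[X in _ < X](size_iota 0) -has_find.
by apply/hasP; exists n; rewrite ?mem_iota.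
Qed.

Lemma reach_dist u v : reach (dist u v) u v.
Proof.
have := nth_find 0 (_ : has (fun n => reach n u v) (iota 0 #|T|)).
rewrite nth_iota ?dist_lt_card //; apply.
by rewrite has_find size_iota dist_lt_card.
Qed.

Lemma dist_leq n u v : reach n u v -> dist u v <= n.
Proof.
move=> r; case: (leqP #|T| n) => [le_Tn | lt_nT].
  exact: ltnW (leq_trans (dist_lt_card u v) le_Tn).
rewrite leqNgt; apply/negP=> lt_nd.
by have := before_find 0 lt_nd; rewrite nth_iota // add0n r.
Qed.

Lemma dist_sym u v : dist u v = dist v u.
Proof. by apply/eqP; rewrite eqn_leq !dist_leq // reach_sym // reach_dist. Qed.

Lemma dist_triangle u w v : dist u v <= dist u w + dist w v.
Proof. exact/dist_leq/reach_trans/reach_dist/reach_dist. Qed.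

Lemma dist0 u : dist u u = 0.
Proof. by apply/eqP; rewrite -leqn0 dist_leq /=. Qed.

Lemma dist_eq0 u v : dist u v = 0 -> u = v.
Proof. by move=> duv; have := reach_dist u v; rewrite duv => /eqP. Qed.

Lemma dist_edge u v : e u v -> dist u v = 1.
Proof.
move=> euv; apply/eqP; rewrite eqn_leq dist_leq ?reach_edge // lt0n.
by apply/eqP=> /dist_eq0 uv; rewrite uv irr_e in euv.
Qed.

Lemma dist_edge_le x u v : e u v -> dist x v <= (dist x u).+1.
Proof. by move=> uv; have := dist_triangle x u v; rewrite (dist_edge uv) addn1. Qed.

Lemma dist_next u v n : dist u v = n.+1 -> exists2 w, e u w & dist w v = n.
Proof.
move=> duv; have := reach_dist u v; rewrite duv /=.
case/orP=> [/dist_leq | /existsP[w /andP[euw rwv]]]; first by rewrite duv ltnn.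
exists w => //; apply/eqP; rewrite eqn_leq dist_leq //=.
by have := dist_triangle u w v; rewrite duv dist_edge.
Qed.

Lemma in_interval u v x :
  (x \in interval e u v) = (dist u x + dist x v == dist u v).
Proof. by rewrite inE. Qed.

Lemma in_slice k u v x :
  (x \in slice e k u v) = (dist u x + dist x v == dist u v) && (dist u x == k).
Proof. by rewrite !inE. Qed.

Lemma slice_nonempty k x y : k <= dist x y -> exists c, c \in slice e k x y.
Proof.
elim: k => [|k IHk] lt_ky; first by exists x; rewrite in_slice dist0 add0n !eqxx.
have [c] := IHk (ltnW lt_ky); rewrite in_slice => /andP[/eqP cI /eqP xc].
have [c' cc' c'y] := @dist_next c y (dist x y - k.+1) ltac:(lia).
exists c'; rewrite in_slice.
have := dist_triangle x c c'; have := dist_triangle x c' y.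
rewrite (dist_edge cc'); lia.
Qed.

Lemma dist_geodesic_next x y a q :
  a \in interval e x y -> e a q -> dist a y = (dist q y).+1 ->
  dist x q = (dist x a).+1.
Proof.
rewrite in_interval => /eqP aI aq qy.
have := dist_triangle x a q; have := dist_triangle x q y.
rewrite (dist_edge aq); lia.
Qed.

Lemma dist_le_ecc u v : dist u v <= ecc e v.
Proof. exact: (leq_bigmax (F := fun u => dist u v)). Qed.

Variable i : nat.
Hypothesis alpha : alpha_metric e i.

Lemma alpha_edge u v w x : e v w ->
  dist u w = (dist u v).+1 -> dist v x = (dist w x).+1 ->
  dist u v + dist v x <= dist u x + i.
Proof.
move=> vw uw vx; apply: (alpha (w := w)) => //; rewrite in_interval //.
  by rewrite uw (dist_edge vw) addn1.
by rewrite vx (dist_edge vw) add1n.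
Qed.

Lemma slice_closer_or_bound k x y v c : c \in slice e k x y ->
  dist v c + minn (dist x c) (dist y c) <= maxn (dist v x) (dist v y) + i \/
  exists2 c', c' \in slice e k x y & dist v c' < dist v c.
Proof.
rewrite in_slice => /andP[/eqP cI /eqP xc].
case vc: (dist v c) => [|n].
  by left; rewrite -(dist_eq0 vc) (dist_sym x) (dist_sym y); lia.
rewrite dist_sym in vc; have [c' cc' c'v] := dist_next vc.
move: (dist_sym y c) (dist_sym y c') (dist_sym v x) (dist_sym v y).
move: (dist_sym v c) (dist_sym v c') => svc svc' syc syc' svx svy.
case: (ltnP (dist x c) (dist x c')) => [xc' | c'x].
  left; have := @alpha_edge x c c' v cc' _ (_ : dist c v = (dist c' v).+1).
  by have := dist_edge_le x cc'; rewrite vc c'v; lia.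
case: (ltnP (dist y c) (dist y c')) => [yc' | c'y].
  left; have := @alpha_edge y c c' v cc' _ (_ : dist c v = (dist c' v).+1).
  by have := dist_edge_le y cc'; rewrite vc c'v; lia.
right; exists c'; last by lia.
by have := dist_triangle x c' y; rewrite in_slice; lia.
Qed.

Lemma exists_slice_vertex_near k x y v : k <= dist x y ->
  exists2 c, c \in slice e k x y &
    dist v c + minn (dist x c) (dist y c) <= maxn (dist v x) (dist v y) + i
    /\ 2 * dist v c <= 2 * maxn (dist v x) (dist v y) + i.
Proof.
move=> /slice_nonempty[c0 c0S].
have [c cS cmin] := arg_minnP (fun c => dist v c) c0S.
have near : dist v c + minn (dist x c) (dist y c) <= maxn (dist v x) (dist v y) + i.
  by case: (slice_closer_or_bound v cS) => // -[c' /cmin]; rewrite ltnNge => ->.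
exists c => //; split=> //.
by have := dist_triangle v x c; have := dist_triangle v y c; lia.
Qed.

Lemma dist_step_towards x y a b q :
  a \in interval e x y -> e a q -> dist a y = (dist q y).+1 ->
  dist x b + i < dist x a + dist a b -> dist b y + i < dist a y + dist a b ->
  dist q b = dist a b.
Proof.
move=> aI aq qy far_x far_y; have xq := dist_geodesic_next aI aq qy.
have qa : e q a by rewrite sym_e.
have := dist_edge_le b aq; have := dist_edge_le b qa.
rewrite !(dist_sym b) => ab_le qb_le.
case: (ltngtP (dist q b) (dist a b)) => // [qb | qb].
  by have := @alpha_edge x a q b aq xq ltac:(lia); lia.
have := @alpha_edge b a q y aq ltac:(rewrite !(dist_sym b); lia) qy.
by rewrite (dist_sym b); lia.
Qed.

Lemma slice_diam k x y a b :
  a \in slice e k x y -> b \in slice e k x y -> dist a b <= i.+1.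
Proof.
move Ej: (dist a y) => j; elim: j k a b Ej => [|j IHj] k a b ay;
  rewrite !in_slice => /andP[/eqP aI /eqP xa] /andP[/eqP bI /eqP xb].
  have by0 : dist b y = 0 by lia.
  by rewrite (dist_eq0 ay) (dist_eq0 by0) dist0.
rewrite leqNgt; apply/negP=> far.
have [q aq qy] := dist_next ay.
have by1 : dist b y = j.+1 by lia.
have [w bw wy] := dist_next by1.
have [ayq byw] : dist a y = (dist q y).+1 /\ dist b y = (dist w y).+1 by lia.
have [aI' bI'] : a \in interval e x y /\ b \in interval e x y.
  by rewrite !in_interval aI bI.
have xq := dist_geodesic_next aI' aq ayq; have xw := dist_geodesic_next bI' bw byw.
have qb := dist_step_towards (b := b) aI' aq ayq ltac:(lia) ltac:(lia).
have wq := dist_step_towards (b := q) bI' bw byw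
  ltac:(rewrite (dist_sym b q); lia) ltac:(rewrite (dist_sym b q); lia).
have qS : q \in slice e k.+1 x y by rewrite in_slice; lia.
have wS : w \in slice e k.+1 x y by rewrite in_slice; lia.
have := IHj k.+1 q w qy qS wS.
by rewrite (dist_sym q w) wq (dist_sym b q) qb; lia.
Qed.

Lemma interval_dist_bound x y v z : z \in interval e x y ->
  dist z v + minn (dist x z) (dist y z) <= maxn (dist x v) (dist y v) + 2 * i + 1
  /\ 2 * dist z v <= 2 * maxn (dist x v) (dist y v) + 3 * i + 2.
Proof.
rewrite in_interval => /eqP zI.
have zS : z \in slice e (dist x z) x y by rewrite in_slice zI !eqxx.
have [c cS [near near2]] := @exists_slice_vertex_near (dist x z) x y v ltac:(lia).
have := slice_diam zS cS; have := dist_triangle z c v.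
move: cS; rewrite in_slice => /andP[/eqP cI /eqP xc].
move: (dist_sym y z) (dist_sym y c) (dist_sym v c) (dist_sym v x) (dist_sym v y).
lia.
Qed.

Lemma interval_ecc_bound x y v z :
  z \in interval e x y -> v \in farthest e z ->
  ecc e z + minn (dist x z) (dist y z) <= maxn (ecc e x) (ecc e y) + 2 * i + 1
  /\ 2 * ecc e z <= 2 * maxn (ecc e x) (ecc e y) + 3 * i + 2.
Proof.
move=> /(interval_dist_bound v) near; rewrite inE => /eqP vz.
have := dist_le_ecc v x; have := dist_le_ecc v y.
rewrite -vz; move: (dist_sym v z) (dist_sym v x) (dist_sym v y); lia.
Qed.

End ConnectedGraph.

Unset Implicit Arguments.

Theorem lemma4 (T : finType) (e : rel T) (i : nat) :
  simple_graph e -> connected_graph e -> alpha_metric e i ->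
  (forall (x y v : T) (k : nat), k <= dist e x y ->
     exists2 c, c \in slice e k x y &
       dist e v c + minn (dist e x c) (dist e y c)
         <= maxn (dist e v x) (dist e v y) + i
       /\ 2 * dist e v c <= 2 * maxn (dist e v x) (dist e v y) + i)
  /\
  (forall x y v z : T, z \in interval e x y ->
       dist e z v + minn (dist e x z) (dist e y z)
         <= maxn (dist e x v) (dist e y v) + 2 * i + 1
    /\ 2 * dist e z v <= 2 * maxn (dist e x v) (dist e y v) + 3 * i + 2)
  /\
  (forall x y v z : T, z \in interval e x y -> v \in farthest e z ->
       ecc e z + minn (dist e x z) (dist e y z)
         <= maxn (ecc e x) (ecc e y) + 2 * i + 1
    /\ 2 * ecc e z <= 2 * maxn (ecc e x) (ecc e y) + 3 * i + 2).
Proof.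
move=> [sym_e irr_e] conn alpha; split; last split.
- by move=> x y v k; apply: exists_slice_vertex_near.
- by move=> x y v z; apply: interval_dist_bound.
- by move=> x y v z; apply: interval_ecc_bound.
Qed.
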